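(* Let $\mathbf A$ be a t-algebra of type $\tau$ and trace $\mathsf a$, let $\mathcal F$ be a functional clone $\tau$-algebra with value domain $\mathbf A$ and universe $F\subseteq A^{\mathsf a}$, and let $s\in\mathsf a$. Then (i) the map $\bar s:F\to A$, $\bar s(\varphi)=\varphi(s)$, is a t-homomorphism from the t-algebra $\mathcal F^\downarrow$ into $\mathbf A$; and (ii) $\mathcal F^\downarrow$ is t-isomorphic to a t-subalgebra of a t-power of $\mathbf A$ (namely via $\varphi\mapsto(\varphi(s))_{s\in\mathsf a}$ into the t-power with index set $\mathsf a$).
   Context: $\mathbb N=\{1,2,\dots\}$. A thread on $A$ is $s\in A^{\mathbb N}$; $r[a_1,\dots,a_n]$ is the thread with entries $a_i$ for $i\le n$ and $r_i$ for $i>n$. $r\equiv_{\mathbb N}s$ iff $\{i:r_i\ne s_i\}$ is finite; $[s]_{\mathbb N}$ denotes the class. A trace on $A$ is a nonempty $\mathsf a\subseteq A^{\mathbb N}$ that is a union of $\equiv_{\mathbb N}$-classes. For $f:A\to B$, $f^{\mathbb N}$ acts coordinatewise on threads. A t-algebra of type $\tau$ and trace $\mathsf a$ is $\mathbf A=(A,\mathsf a,\sigma^{\mathbf A})_{\sigma\in\tau}$ with each $\sigma^{\mathbf A}:\mathsf a\to A$ an arbitrary map. t-subalgebra of $\mathbf A$: $(B,\mathsf b,\sigma^{\mathbf A}|_{\mathsf b})$ with $B\subseteq A$, $\mathsf b\subseteq\mathsf a$ a trace on $B$, $\sigma^{\mathbf A}(s)\in B$ for all $s\in\mathsf b$. t-homomorphism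 $\mathbf A\to\mathbf B$ (traces $\mathsf a,\mathsf b$): a map $f:A\to B$ with $f^{\mathbb N}(\mathsf a)\subseteq\mathsf b$ and $f(\sigma^{\mathbf A}(s))=\sigma^{\mathbf B}(f^{\mathbb N}(s))$ for $s\in\mathsf a$; a t-isomorphism is a bijective $f$ with $f^{\mathbb N}:\mathsf a\to\mathsf b$ surjective. The t-product of $\mathbf A_j$ ($j\in J$) has universe $\prod_jA_j$, trace $\prod_j\mathsf a_j$ (where $(s^j)_j$ is identified with the thread whose $k$-th entry is $(s^j_k)_j$), and $\sigma((s^j)_j)=(\sigma^{\mathbf A_j}(s^j))_j$. Clone $\tau$-algebras: algebras $(C,q_n,\mathsf e_i,\sigma)$ with constants $\mathsf e_i$ ($i\ge1$), $\sigma\in\tau$, and $(n+1)$-ary $q_n$ satisfying (C1) $q_n(\mathsf e_i,\bar x)=x_i$ ($i\le n$); (C2) $q_n(\mathsf e_j,\bar x)=\mathsf e_j$ ($j>n$); (C3) $q_n(x,\mathsf e_1,\dots,\mathsf e_n)=x$; (C4) $q_n(x,\bar y)=q_k(x,\bar y,\mathsf e_{n+1},\dots,\mathsf e_k)$ ($k>n$); (C5) $q_n(q_n(x,\bar y),\bar z)=q_n(x,q_n(y_1,\bar z),\dots,q_n(y_n,\bar z))$. The full functional clone $\tau$-algebra $\mathbf A^{(\mathsf a)}$ has universe all maps $\mathsf a\to A$, $\mathsf e_i(s)=s_i$, $q_n(\varphi,\psi_1,\dots,\psi_n)(s)=\varphi(s[\psi_1(s),\dots,\psi_n(s)])$, $\sigma\mapsto\sigma^{\mathbf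 A}$; its subalgebras are the functional clone $\tau$-algebras with value domain $\mathbf A$. For a clone $\tau$-algebra $\mathcal C$ let $\epsilon^{\mathcal C}=(\mathsf e_1^{\mathcal C},\mathsf e_2^{\mathcal C},\dots)$ and $\pmb\epsilon=[\epsilon^{\mathcal C}]_{\mathbb N}$ (a trace on $C$); for $c\in C$ define $\varphi_c:\pmb\epsilon\to C$ by $\varphi_c(\epsilon^{\mathcal C}[s_1,\dots,s_n])=q_n^{\mathcal C}(c,s_1,\dots,s_n)$. The t-algebra under $\mathcal C$ is $\mathcal C^\downarrow=(C,\pmb\epsilon,\varphi_{\sigma^{\mathcal C}})_{\sigma\in\tau}$. *)

(* Conventions: the paper's index set N = {1,2,...} is encoded
   by Rocq's nat = {0,1,...}; paper index i corresponds to Rocq index i-1.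
   A "t-algebra" is given by a carrier type X together with a universe
   predicate U : X -> Prop, a trace a : (nat -> X) -> Prop and operations
   op : tau -> (nat -> X) -> X (only their values on the trace matter). *)
From Stdlib Require Import List ClassicalEpsilon.
Import ListNotations.

Definition equivN {X : Type} (r s : nat -> X) : Prop :=
  exists N, forall k, N <= k -> r k = s k.

Definition upd {X : Type} (r : nat -> X) (l : list X) : nat -> X :=
  fun k => nth k l (r k).

Definition IsTrace {X : Type} (U : X -> Prop) (a : (nat -> X) -> Prop) : Prop :=
  (exists s, a s) /\
  (forall s, a s -> forall i, U (s i)) /\
  (forall r s, a s -> (forall i, U (r i)) -> equivN r s -> a r).

Definition IsTAlg {tau X : Type} (U : X -> Prop) (a : (nat -> X) -> Prop)
  (op : tau -> (nat -> X) -> X) : Prop :=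
  IsTrace U a /\ (forall sg s, a s -> U (op sg s)).

Definition IsTSubalg {tau X : Type} (U : X -> Prop) (a : (nat -> X) -> Prop)
  (op : tau -> (nat -> X) -> X) (B : X -> Prop) (b : (nat -> X) -> Prop) : Prop :=
  (forall x, B x -> U x) /\ IsTrace B b /\ (forall s, b s -> a s) /\
  (forall sg s, b s -> B (op sg s)).

Definition IsTHom {tau X Y : Type}
  (U : X -> Prop) (a : (nat -> X) -> Prop) (op : tau -> (nat -> X) -> X)
  (V : Y -> Prop) (b : (nat -> Y) -> Prop) (op' : tau -> (nat -> Y) -> Y)
  (f : X -> Y) : Prop :=
  (forall x, U x -> V (f x)) /\
  (forall s, a s -> b (fun k => f (s k))) /\
  (forall sg s, a s -> f (op sg s) = op' sg (fun k => f (s k))).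

Definition IsTIso {tau X Y : Type}
  (U : X -> Prop) (a : (nat -> X) -> Prop) (op : tau -> (nat -> X) -> X)
  (V : Y -> Prop) (b : (nat -> Y) -> Prop) (op' : tau -> (nat -> Y) -> Y)
  (f : X -> Y) : Prop :=
  IsTHom U a op V b op' f /\
  (forall x y, U x -> U y -> f x = f y -> x = y) /\
  (forall y, V y -> exists x, U x /\ f x = y) /\
  (forall t, b t -> exists s, a s /\ forall k, t k = f (s k)).

Definition powU {X J : Type} (U : X -> Prop) : (J -> X) -> Prop :=
  fun x => forall j, U (x j).
Definition powTrace {X J : Type} (a : (nat -> X) -> Prop) : (nat -> (J -> X)) -> Prop :=
  fun S => forall j, a (fun k => S k j).
Definition powOp {tau X J : Type} (op : tau -> (nat -> X) -> X) :
  tau -> (nat -> (J -> X)) -> (J -> X) :=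
  fun sg S j => op sg (fun k => S k j).

Definition TrFun {X : Type} (a : (nat -> X) -> Prop) : Type :=
  {s : nat -> X | a s} -> X.

(* projections e_{i+1} *)
Definition projF {X : Type} (a : (nat -> X) -> Prop) (i : nat) : TrFun a :=
  fun s => proj1_sig s i.

(* q_n(phi, psi_1, ..., psi_n)(s) = phi(s[psi_1(s),...,psi_n(s)]), n = length psis.
   (When s[...] is not in the trace -- impossible for maps into the universe --
   a junk value is returned.) *)
Definition qF {X : Type} (a : (nat -> X) -> Prop) (phi : TrFun a) (psis : list (TrFun a)) :
  TrFun a :=
  fun s =>
    match excluded_middle_informative
            (a (upd (proj1_sig s) (map (fun psi => psi s) psis))) with
    | left H => phi (exist _ _ H)
    | right _ => phi s
    end.

Definition sigF {tau X : Type} (a : (nat -> X) -> Prop) (op : tau -> (nat -> X) -> X)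
  (sg : tau) : TrFun a :=
  fun s => op sg (proj1_sig s).

Definition IsFunctionalClone {tau X : Type} (U : X -> Prop) (a : (nat -> X) -> Prop)
  (op : tau -> (nat -> X) -> X) (F : TrFun a -> Prop) : Prop :=
  (forall phi, F phi -> forall s, U (phi s)) /\
  (forall i, F (projF a i)) /\
  (forall sg, F (sigF a op sg)) /\
  (forall phi psis, F phi -> Forall F psis -> F (qF a phi psis)).

Definition epsTrace {X : Type} (a : (nat -> X) -> Prop) (F : TrFun a -> Prop) :
  (nat -> TrFun a) -> Prop :=
  fun t => (forall i, F (t i)) /\ equivN t (projF a).

Definition epsLen {X : Type} (a : (nat -> X) -> Prop) (t : nat -> TrFun a) : nat :=
  epsilon (inhabits 0) (fun N => forall k, N <= k -> t k = projF a k).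

(* phi_c(epsilon[s_1,...,s_n]) = q_n(c, s_1, ..., s_n) *)
Definition downOp {X : Type} (a : (nat -> X) -> Prop) (c : TrFun a) (t : nat -> TrFun a) :
  TrFun a :=
  qF a c (map t (seq 0 (epsLen a t))).

Definition downOps {tau X : Type} (a : (nat -> X) -> Prop) (op : tau -> (nat -> X) -> X) :
  tau -> (nat -> TrFun a) -> TrFun a :=
  fun sg t => downOp a (sigF a op sg) t.

(* Every element of F^down acts on a thread of the trace a; evaluating
   q_n(sigma, t_1, ..., t_n) at s gives sigma^A applied to the thread
   s[t_1(s), ..., t_n(s)], which is exactly (t_k(s))_k because t agrees with
   the projections beyond n.  So evaluation at s commutes with the operations,
   and the family of all evaluations identifies F^down with its image in the
   t-power of A, whose operations are computed coordinatewise. *)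
From Stdlib Require Import List ClassicalEpsilon FunctionalExtensionality Lia PeanoNat.

Lemma upd_seq_prefix (X : Type) (r u : nat -> X) (n : nat) :
  (forall k, n <= k -> u k = r k) -> upd r (map u (seq 0 n)) = u.
Proof.
  intros Hu. apply functional_extensionality. intro k. unfold upd.
  destruct (Nat.lt_ge_cases k n) as [Hk | Hk].
  - rewrite (nth_indep _ _ (u 0)) by (rewrite length_map, length_seq; exact Hk).
    rewrite map_nth, seq_nth by exact Hk. reflexivity.
  - rewrite nth_overflow by (rewrite length_map, length_seq; exact Hk).
    symmetry. apply Hu, Hk.
Qed.

Section DownAlgebra.

Variables (tau X : Type) (U : X -> Prop) (a : (nat -> X) -> Prop)
  (op : tau -> (nat -> X) -> X) (F : TrFun a -> Prop).
Hypothesis Ha : IsTrace U a.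
Hypothesis HF : IsFunctionalClone U a op F.

Lemma epsLen_spec (t : nat -> TrFun a) :
  equivN t (projF a) -> forall k, epsLen a t <= k -> t k = projF a k.
Proof.
  intros Ht. exact (epsilon_spec (inhabits 0) _ Ht).
Qed.

Lemma epsTrace_eval (t : nat -> TrFun a) (s : {s : nat -> X | a s}) :
  epsTrace a F t -> a (fun k => t k s).
Proof.
  destruct s as [s Hs]. intros [HtF [N HN]].
  destruct Ha as [_ [_ Hclosed]]. destruct HF as [HFU _].
  apply (Hclosed _ s Hs).
  - intro i. apply HFU, HtF.
  - exists N. intros k Hk. rewrite (HN k Hk). reflexivity.
Qed.

Lemma downOps_eval (sg : tau) (t : nat -> TrFun a) (s : {s : nat -> X | a s}) :
  epsTrace a F t -> downOps a op sg t s = op sg (fun k => t k s).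
Proof.
  intros Ht.
  assert (Hupd : upd (proj1_sig s) (map (fun psi => psi s) (map t (seq 0 (epsLen a t))))
                 = (fun k => t k s)).
  { rewrite map_map. apply upd_seq_prefix. intros k Hk.
    rewrite (epsLen_spec t (proj2 Ht) k Hk). reflexivity. }
  unfold downOps, downOp, qF.
  destruct excluded_middle_informative as [H | H].
  - unfold sigF. simpl. rewrite Hupd. reflexivity.
  - exfalso. apply H. rewrite Hupd. exact (epsTrace_eval t s Ht).
Qed.

Lemma downOps_powOp (sg : tau) (t : nat -> TrFun a) :
  epsTrace a F t -> downOps a op sg t = powOp op sg t.
Proof.
  intros Ht. apply functional_extensionality. intro s. exact (downOps_eval sg t s Ht).
Qed.

Lemma downOps_closed (sg : tau) (t : nat -> TrFun a) :
  epsTrace a F t -> F (downOps a op sg t).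
Proof.
  intros [HtF _]. destruct HF as [_ [_ [HsigF HqF]]].
  apply HqF; [apply HsigF |].
  apply Forall_forall. intros psi Hpsi. apply in_map_iff in Hpsi.
  destruct Hpsi as [i [<- _]]. apply HtF.
Qed.

Lemma epsTrace_isTrace : IsTrace F (epsTrace a F).
Proof.
  destruct HF as [_ [HprojF _]]. split; [| split].
  - exists (projF a). split; [exact HprojF | exists 0; auto].
  - intros t [HtF _]. exact HtF.
  - intros r t [_ [N HN]] HrF [M HM]. split; [exact HrF |].
    exists (max N M). intros k Hk. rewrite HM by lia. apply HN. lia.
Qed.

Lemma eval_isTHom (s : nat -> X) (Hs : a s) :
  IsTHom F (epsTrace a F) (downOps a op) U a op
    (fun phi : TrFun a => phi (exist _ s Hs)).
Proof.
  destruct HF as [HFU _]. split; [| split].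
  - intros phi Hphi. apply HFU, Hphi.
  - intros t Ht. exact (epsTrace_eval t _ Ht).
  - intros sg t Ht. exact (downOps_eval sg t _ Ht).
Qed.

Lemma down_isTSubalg_pow :
  IsTSubalg (powU U) (powTrace a) (powOp op) F (epsTrace a F).
Proof.
  destruct HF as [HFU _]. split; [| split; [| split]].
  - intros phi Hphi s. apply HFU, Hphi.
  - exact epsTrace_isTrace.
  - intros t Ht s. exact (epsTrace_eval t s Ht).
  - intros sg t Ht. rewrite <- downOps_powOp by exact Ht. exact (downOps_closed sg t Ht).
Qed.

Lemma down_isTIso_pow :
  IsTIso F (epsTrace a F) (downOps a op) F (epsTrace a F) (powOp op)
    (fun phi : TrFun a => fun s => phi s).
Proof.
  split; [split; [| split] | split; [| split]].
  - auto.
  - auto.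
  - intros sg t Ht. exact (downOps_powOp sg t Ht).
  - auto.
  - intros psi Hpsi. exists psi. auto.
  - intros t Ht. exists t. auto.
Qed.

End DownAlgebra.

Theorem mainTheorem3 (tau X : Type) (U : X -> Prop) (a : (nat -> X) -> Prop)
  (op : tau -> (nat -> X) -> X) (F : TrFun a -> Prop)
  (HA : IsTAlg U a op) (HF : IsFunctionalClone U a op F) :
  (forall (s : nat -> X) (Hs : a s),
     IsTHom F (epsTrace a F) (downOps a op) U a op
       (fun phi : TrFun a => phi (exist _ s Hs))) /\
  (exists (B : TrFun a -> Prop) (b : (nat -> TrFun a) -> Prop),
     IsTSubalg (powU U) (powTrace a) (powOp op) B b /\
     IsTIso F (epsTrace a F) (downOps a op) B b (powOp op)
       (fun phi : TrFun a => fun j : {s : nat -> X | a s} => phi j)).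
Proof.
  destruct HA as [Ha _].
  split.
  - exact (eval_isTHom tau X U a op F Ha HF).
  - exists F, (epsTrace a F). split.
    + exact (down_isTSubalg_pow tau X U a op F Ha HF).
    + exact (down_isTIso_pow tau X U a op F Ha HF).
Qed.
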